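(* In the setting of the adaptive mirror triangle method for the minimax problem (see context), for every step $k\ge0$ performed by the method and every $x\in Q$, $$A_{k+1}f(x_{k+1})-A_kf(x_k)+V(x,u_{k+1})-V(x,u_k)\le\alpha_{k+1}f(x),$$ where $\alpha_{k+1},A_{k+1},u_{k+1},x_{k+1}$ are the values accepted at step $k+1$.
   Context: $\mathbb{R}^n$ carries a norm $\|\cdot\|$ with dual norm $\|\lambda\|_*=\max_{\|\nu\|\le1}\langle\lambda,\nu\rangle$; $Q\subseteq\mathbb{R}^n$ closed convex; $f_1,\dots,f_M$ convex on $Q$, differentiable, with $\|\nabla f_i(x)-\nabla f_i(y)\|_*\le L\|x-y\|$; $h$ convex on $Q$; $f(x)=\max_i f_i(x)+h(x)$. A prox-function is a continuously differentiable $d:Q\to\mathbb{R}$, $1$-strongly convex w.r.t. $\|\cdot\|$; $V(x,y)=d(x)-d(y)-\langle\nabla d(y),x-y\rangle$. Method (with $x_0\in Q$, $0<L_0\le L$): $y_0=u_0=x_0$, $L_1=L_0/2$, $\alpha_0=A_0=0$. Step $k+1$ with current $L_{k+1}$: (i) $\alpha_{k+1}$ is the largest root of $A_k+\alpha=L_{k+1}\alpha^2$, $A_{k+1}=A_k+\alpha_{k+1}$; (ii) $y_{k+1}=(\alpha_{k+1}u_k+A_kx_k)/A_{k+1}$; (iii) $u_{k+1}=\arg\min_{x\in Q}\{V(x,u_k)+\alpha_{k+1}(\max_j[f_j(y_{k+1})+\langle\nabla f_j(y_{k+1}),x-y_{k+1}\rangle]+h(x))\}$; (iv) $x_{k+1}=(\alpha_{k+1}u_{k+1}+A_kx_k)/A_{k+1}$;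 (v) if $f(x_{k+1})\le\max_j\{f_j(y_{k+1})+\langle\nabla f_j(y_{k+1}),x_{k+1}-y_{k+1}\rangle\}+\frac{L_{k+1}}{2}\|x_{k+1}-y_{k+1}\|^2+h(x_{k+1})$, set $L_{k+2}=L_{k+1}/2$ and go to the next step; otherwise replace $L_{k+1}$ by $2L_{k+1}$ and repeat step $k+1$ from (i). *)

From HB Require Import structures.
From mathcomp Require Import all_boot all_order all_algebra.
From mathcomp Require Import all_classical all_reals all_analysis.
Set Implicit Arguments. Unset Strict Implicit. Unset Printing Implicit Defensive.
Import Order.TTheory GRing.Theory Num.Theory.
Import numFieldNormedType.Exports.
Local Open Scope classical_set_scope.
Local Open Scope ring_scope.

Section Defs.
Variables (R : realType) (n : nat).
Notation vec := 'rV[R]_n.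

Definition dot (l v : vec) : R := \sum_(i < n) l ord0 i * v ord0 i.

Definition is_norm (nrm : vec -> R) : Prop :=
  [/\ forall x, 0 <= nrm x,
      forall x, nrm x = 0 -> x = 0,
      forall (a : R) x, nrm (a *: x) = `|a| * nrm x &
      forall x y, nrm (x + y) <= nrm x + nrm y].

Definition dual_norm (nrm : vec -> R) (l : vec) : R :=
  sup [set dot l v | v in [set v | nrm v <= 1]].

Definition convex_on (Q : set vec) (g : vec -> R) : Prop :=
  forall x y (t : R), Q x -> Q y -> 0 <= t <= 1 ->
    g (t *: x + (1 - t) *: y) <= t * g x + (1 - t) * g y.

Definition strongly_convex1_on (nrm : vec -> R) (Q : set vec) (g : vec -> R) : Prop :=
  forall x y (t : R), Q x -> Q y -> 0 <= t <= 1 ->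
    g (t *: x + (1 - t) *: y) <=
      t * g x + (1 - t) * g y - t * (1 - t) / 2 * nrm (x - y) ^+ 2.

Definition gradient_on (Q : set vec) (g : vec -> R) (gr : vec -> vec) : Prop :=
  forall x, Q x -> differentiable g x /\ forall v, 'd g x v = dot (gr x) v.

Definition bregman (d : vec -> R) (gd : vec -> vec) (x y : vec) : R :=
  d x - d y - dot (gd y) (x - y).

(* maximum over the M = m+1 indices *)
Definition bmax (m : nat) (F : 'I_m.+1 -> R) : R :=
  \big[Num.max/F ord0]_(i < m.+1) F i.

Definition fobj (m : nat) (fs : 'I_m.+1 -> vec -> R) (h : vec -> R) (x : vec) : R :=
  bmax (fun i => fs i x) + h x.

Definition linmax (m : nat) (fs : 'I_m.+1 -> vec -> R) (gs : 'I_m.+1 -> vec -> vec)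
  (y x : vec) : R :=
  bmax (fun j => fs j y + dot (gs j y) (x - y)).

(* A run of N steps (steps 1..N) of the adaptive mirror triangle method.
   Lk k.+1, alpha k.+1, A k.+1, y k.+1, u k.+1, x k.+1 are the values
   accepted at step k+1. *)
Definition amt_run (m : nat) (nrm : vec -> R) (Q : set vec)
  (fs : 'I_m.+1 -> vec -> R) (gs : 'I_m.+1 -> vec -> vec) (h : vec -> R)
  (d : vec -> R) (gd : vec -> vec) (x0 : vec) (L0 : R) (N : nat)
  (Lk alpha A : nat -> R) (x u y : nat -> vec) : Prop :=
  (Lk 0%N = L0 /\ alpha 0%N = 0 /\ A 0%N = 0 /\ x 0%N = x0 /\ u 0%N = x0 /\ y 0%N = x0) /\
   forall k : nat, (k < N)%N ->
   [/\ (* backtracking: L_{k+1} = (L_k / 2) * 2^i for some number i of doublings *)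
       (exists i : nat, Lk k.+1 = Lk k / 2 * 2 ^+ i) /\
       (A k + alpha k.+1 = Lk k.+1 * alpha k.+1 ^+ 2 /\
         (forall a : R, A k + a = Lk k.+1 * a ^+ 2 -> a <= alpha k.+1)),
       (A k.+1 = A k + alpha k.+1 /\
        y k.+1 = (A k.+1)^-1 *: (alpha k.+1 *: u k + A k *: x k)),
       Q (u k.+1) /\
         (forall z, Q z ->
           bregman d gd (u k.+1) (u k) + alpha k.+1 * (linmax fs gs (y k.+1) (u k.+1) + h (u k.+1))
           <= bregman d gd z (u k) + alpha k.+1 * (linmax fs gs (y k.+1) z + h z)),
       x k.+1 = (A k.+1)^-1 *: (alpha k.+1 *: u k.+1 + A k *: x k) &
       fobj fs h (x k.+1) <= linmax fs gs (y k.+1) (x k.+1)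
          + Lk k.+1 / 2 * nrm (x k.+1 - y k.+1) ^+ 2 + h (x k.+1)].

End Defs.

(** The acceptance test at step k+1, combined with L_{k+1} alpha^2 = A_{k+1} and
    x_{k+1} - y_{k+1} = (alpha/A_{k+1}) (u_{k+1} - u_k), bounds A_{k+1} f(x_{k+1}) by
    A_{k+1} psi(x_{k+1}) + ||u_{k+1} - u_k||^2 / 2, where psi is the model
    max_j [f_j(y_{k+1}) + <grad f_j(y_{k+1}), . - y_{k+1}>] + h minimized in (iii).
    Convexity of psi splits A_{k+1} psi(x_{k+1}) into alpha psi(u_{k+1}) + A_k psi(x_k).
    The first-order optimality of u_{k+1}, through the three-point identity of the
    Bregman divergence, and the strong convexity of d, which gives
    ||u_{k+1} - u_k||^2 / 2 <= V(u_{k+1}, u_k), trade alpha psi(u_{k+1}) for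
    alpha psi(x) + V(x, u_k) - V(x, u_{k+1}). Finally psi <= f, since each f_j lies
    above its linearization. All first-order facts are obtained from the Frechet
    derivative through one-sided difference quotients along segments. *)
From HB Require Import structures.
From mathcomp Require Import all_boot all_order all_algebra.
From mathcomp Require Import all_classical all_reals all_analysis.
From mathcomp Require Import ring lra.
Set Implicit Arguments. Unset Strict Implicit.
Import Order.TTheory GRing.Theory Num.Theory.
Import numFieldNormedType.Exports.
Local Open Scope classical_set_scope.
Local Open Scope ring_scope.

Section Combinations.
Variables (K : fieldType) (V : lmodType K).

Lemma combination_convexE (A1 A al : K) (a b : V) : A1 = A + al -> A1 != 0 ->
  A1^-1 *: (al *: a + A *: b) = (al / A1) *: a + (1 - al / A1) *: b.
Proof.
move=> eA1 A1_neq0.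
have -> : 1 - al / A1 = A1^-1 * A by rewrite eA1 in A1_neq0 *; field.
by rewrite scalerDr !scalerA mulrC.
Qed.

Lemma combinationBl (A1 A al : K) (a a' b : V) :
  A1^-1 *: (al *: a + A *: b) - A1^-1 *: (al *: a' + A *: b) = (al / A1) *: (a - a').
Proof. by rewrite -scalerBr opprD addrACA subrr addr0 -scalerBr scalerA mulrC. Qed.

End Combinations.

Section FirstOrder.
Variables (R : realType) (n : nat).
Notation vec := 'rV[R]_n.

Lemma dotDr (l a b : vec) : dot l (a + b) = dot l a + dot l b.
Proof. by rewrite /dot -big_split /=; apply: eq_bigr => i _; rewrite mxE mulrDr. Qed.

Lemma dotZr (l : vec) c (a : vec) : dot l (c *: a) = c * dot l a.
Proof. by rewrite /dot mulr_sumr; apply: eq_bigr => i _; rewrite mxE mulrCA. Qed.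

Lemma dotBr (l a b : vec) : dot l (a - b) = dot l a - dot l b.
Proof. by rewrite dotDr -scaleN1r dotZr mulN1r. Qed.

Lemma dotBl (l1 l2 a : vec) : dot (l1 - l2) a = dot l1 a - dot l2 a.
Proof. by rewrite /dot -sumrB; apply: eq_bigr => i _; rewrite !mxE mulrBl. Qed.

Lemma bmax_le m (F : 'I_m.+1 -> R) c : (forall i, F i <= c) -> bmax F <= c.
Proof.
move=> F_le; rewrite /bmax; elim/big_ind: _ => // a b ha hb.
by rewrite ge_max ha hb.
Qed.

Lemma le_bmax m (F : 'I_m.+1 -> R) i : F i <= bmax F.
Proof. by rewrite /bmax (bigD1 i) //= le_max lexx. Qed.

Lemma convex_set_segment (Q : set vec) a b (t : R) : convex_set Q ->
  Q a -> Q b -> 0 <= t <= 1 -> Q (t *: a + (1 - t) *: b).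
Proof.
move=> convQ Qa Qb /andP[t0 t1].
by have := convQ a b (Itv01 t0 t1); rewrite !inE; apply.
Qed.

Lemma segmentE (p q : vec) (t : R) : p + t *: (q - p) = t *: q + (1 - t) *: p.
Proof. by rewrite scalerBr scalerBl scale1r addrCA. Qed.

Lemma cvg_at_right0_le (F : R -> R) l c k : F @ 0^'+ --> l ->
  (forall t, 0 < t <= 1 -> F t <= c + k * t) -> l <= c.
Proof.
move=> Fl F_le.
have : (fun t => F t - k * t) @ 0^'+ --> l - k * 0.
  by apply: cvgB => //; apply: cvgM; [exact: cvg_cst | exact: cvg_at_right_filter cvg_id].
rewrite mulr0 subr0 => Gl; apply: (cvgr_to_le Gl); near=> t.
rewrite lerBlDr; apply: F_le; apply/andP; split.
  by near: t; exact: nbhs_right_gt.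
by near: t; apply: nbhs_right_le; exact: ltr01.
Unshelve. all: by end_near.
Qed.

Lemma cvg_at_right0_ge (F : R -> R) l c : F @ 0^'+ --> l ->
  (forall t, 0 < t <= 1 -> c <= F t) -> c <= l.
Proof.
move=> Fl F_ge; apply: (cvgr_to_ge Fl); near=> t; apply: F_ge; apply/andP; split.
  by near: t; exact: nbhs_right_gt.
by near: t; apply: nbhs_right_le; exact: ltr01.
Unshelve. all: by end_near.
Qed.

Lemma difference_quotient_cvg (g : vec -> R) (gr : vec -> vec) (p v : vec) :
  differentiable g p -> 'd g p v = dot (gr p) v ->
  (fun t => t^-1 * (g (p + t *: v) - g p)) @ 0^'+ --> dot (gr p) v.
Proof.
move=> dg dgE; apply: cvg_dnbhs_at_right.
have -> : (fun t : R => t^-1 * (g (p + t *: v) - g p))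
    = (fun t => t^-1 *: ((g \o shift p) (t *: v) - g p)).
  by apply: boolp.funext => t /=; rewrite [p + _]addrC.
by rewrite -dgE -(deriveE _ dg); exact: diff_derivable.
Qed.

Lemma gradient_dir_le (g : vec -> R) gr p v c k :
  differentiable g p -> 'd g p v = dot (gr p) v ->
  (forall t, 0 < t <= 1 -> g (p + t *: v) - g p <= t * (c + k * t)) ->
  dot (gr p) v <= c.
Proof.
move=> dg dgE g_le; apply: (cvg_at_right0_le (k := k) (difference_quotient_cvg dg dgE)).
by move=> t /[dup] /andP[t0 _] /g_le; rewrite ler_pdivrMl.
Qed.

Lemma gradient_dir_ge (g : vec -> R) gr p v c :
  differentiable g p -> 'd g p v = dot (gr p) v ->
  (forall t, 0 < t <= 1 -> t * c <= g (p + t *: v) - g p) ->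
  c <= dot (gr p) v.
Proof.
move=> dg dgE g_ge; apply: cvg_at_right0_ge (difference_quotient_cvg dg dgE) _.
by move=> t /[dup] /andP[t0 _] /g_ge; rewrite ler_pdivlMl.
Qed.

Lemma convex_gradient_le (Q : set vec) g gr p q :
  convex_on Q g -> gradient_on Q g gr -> Q p -> Q q ->
  g p + dot (gr p) (q - p) <= g q.
Proof.
move=> convg gradg Qp Qq; have [dg dgE] := gradg p Qp.
suff : dot (gr p) (q - p) <= g q - g p by lra.
apply: (gradient_dir_le (k := 0) dg (dgE _)) => t /andP[t0 t1].
have := convg q p t Qq Qp; rewrite (ltW t0) t1 segmentE => /(_ isT); lra.
Qed.

Lemma strongly_convex_bregman_ge nrm (Q : set vec) d gd a b :
  strongly_convex1_on nrm Q d -> gradient_on Q d gd -> Q a -> Q b ->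
  1 / 2 * nrm (a - b) ^+ 2 <= bregman d gd a b.
Proof.
move=> scd gradd Qa Qb; have [dd ddE] := gradd b Qb.
set N := nrm (a - b) ^+ 2.
suff : dot (gd b) (a - b) <= d a - d b - N / 2 by rewrite /bregman; lra.
apply: (gradient_dir_le (k := N / 2) dd (ddE _)) => t /andP[t0 t1].
have := scd a b t Qa Qb; rewrite (ltW t0) t1 segmentE -/N => /(_ isT); nra.
Qed.

Lemma bregman_three_point d gd (z u1 u : vec) :
  bregman d gd z u - bregman d gd z u1 - bregman d gd u1 u
  = dot (gd u1 - gd u) (z - u1).
Proof. by rewrite /bregman dotBl !dotBr; ring. Qed.

(* The three-point inequality: first-order optimality of the prox step (iii). *)
Lemma bregman_prox_le (Q : set vec) d gd (phi : vec -> R) (al : R) u1 u z :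
  convex_set Q -> gradient_on Q d gd -> convex_on Q phi -> 0 <= al ->
  Q u1 -> Q z ->
  (forall w, Q w -> bregman d gd u1 u + al * phi u1 <= bregman d gd w u + al * phi w) ->
  al * phi u1 + bregman d gd z u1 + bregman d gd u1 u
    <= al * phi z + bregman d gd z u.
Proof.
move=> convQ gradd convphi al0 Qu1 Qz u1_min; have [dd ddE] := gradd u1 Qu1.
suff : dot (gd u) (z - u1) + al * (phi u1 - phi z) <= dot (gd u1) (z - u1).
  by have := bregman_three_point d gd z u1 u; rewrite dotBl; lra.
apply: (gradient_dir_ge dd (ddE _)) => t /andP[t0 t1].
have t01 : 0 <= t <= 1 by rewrite (ltW t0) t1.
have := u1_min _ (convex_set_segment convQ Qz Qu1 t01); rewrite -segmentE.
have := convphi z u1 t Qz Qu1 t01; rewrite -segmentE /bregman.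
rewrite [u1 + _ - u]addrAC [dot _ (u1 - u + _)]dotDr dotZr => phi_seg.
have := ler_wpM2l al0 phi_seg; lra.
Qed.

Lemma convex_set_combination (Q : set vec) a b al A : convex_set Q ->
  Q a -> Q b -> 0 <= al -> 0 <= A -> 0 < A + al ->
  Q ((A + al)^-1 *: (al *: a + A *: b)).
Proof.
move=> convQ Qa Qb al0 A0 A1_gt0.
rewrite (combination_convexE _ _ erefl) ?gt_eqF //.
apply: convex_set_segment => //; rewrite divr_ge0 ?(ltW A1_gt0) //=.
by rewrite ler_pdivrMr // mul1r; lra.
Qed.

Lemma convex_on_combination (Q : set vec) g a b al A : convex_on Q g ->
  Q a -> Q b -> 0 <= al -> 0 <= A -> 0 < A + al ->
  (A + al) * g ((A + al)^-1 *: (al *: a + A *: b)) <= al * g a + A * g b.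
Proof.
move=> convg Qa Qb al0 A0 A1_gt0.
rewrite (combination_convexE _ _ erefl) ?gt_eqF //.
have t01 : 0 <= al / (A + al) <= 1.
  by rewrite divr_ge0 ?(ltW A1_gt0) //= ler_pdivrMr // mul1r; lra.
have := ler_wpM2l (ltW A1_gt0) (convg a b _ Qa Qb t01).
suff -> : (A + al) * (al / (A + al) * g a + (1 - al / (A + al)) * g b)
  = al * g a + A * g b by [].
by field; rewrite gt_eqF.
Qed.

Lemma convex_onD (Q : set vec) g1 g2 :
  convex_on Q g1 -> convex_on Q g2 -> convex_on Q (fun w => g1 w + g2 w).
Proof.
move=> convg1 convg2 a b t Qa Qb t01.
by have := convg1 a b t Qa Qb t01; have := convg2 a b t Qa Qb t01; lra.
Qed.

Lemma convex_linmax m (fs : 'I_m.+1 -> vec -> R) gs (Q : set vec) (y : vec) :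
  convex_on Q (linmax fs gs y).
Proof.
move=> a b t _ _ /andP[t0 t1]; apply: bmax_le => i.
have -> : fs i y + dot (gs i y) (t *: a + (1 - t) *: b - y)
    = t * (fs i y + dot (gs i y) (a - y)) + (1 - t) * (fs i y + dot (gs i y) (b - y)).
  by rewrite !dotBr dotDr !dotZr; ring.
have t1' : 0 <= 1 - t by lra.
apply: lerD; apply: ler_wpM2l => //.
  exact: (le_bmax (fun j => fs j y + dot (gs j y) (a - y))).
exact: (le_bmax (fun j => fs j y + dot (gs j y) (b - y))).
Qed.

Lemma linmax_le_fobj m (fs : 'I_m.+1 -> vec -> R) gs h (Q : set vec) (y q : vec) :
  (forall i, convex_on Q (fs i)) -> (forall i, gradient_on Q (fs i) (gs i)) ->
  Q y -> Q q -> linmax fs gs y q + h q <= fobj fs h q.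
Proof.
move=> convf gradf Qy Qq; rewrite lerD2r; apply: bmax_le => i.
exact: le_trans (convex_gradient_le (convf i) (gradf i) Qy Qq) (le_bmax _ i).
Qed.

(* With L alpha^2 = A_{k+1}, the quadratic term of the acceptance test is exactly the
   strong-convexity term of d. *)
Lemma acceptance_scaled nrm (F P Lc al A1 : R) (v : vec) : is_norm nrm ->
  0 < A1 -> 0 <= al -> Lc * al ^+ 2 = A1 ->
  F <= P + Lc / 2 * nrm ((al / A1) *: v) ^+ 2 ->
  A1 * F <= A1 * P + 1 / 2 * nrm v ^+ 2.
Proof.
case=> _ _ nrmZ _ A1_gt0 al0 eA1.
rewrite nrmZ ger0_norm ?divr_ge0 ?(ltW A1_gt0) // => F_le.
have := ler_wpM2l (ltW A1_gt0) F_le.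
suff -> : A1 * (P + Lc / 2 * (al / A1 * nrm v) ^+ 2) = A1 * P + 1 / 2 * nrm v ^+ 2 by [].
rewrite -eA1 in A1_gt0 *; field.
by move: (gt_eqF A1_gt0); rewrite mulf_eq0 expf_eq0 /= => /norP[-> ->].
Qed.

End FirstOrder.

Lemma largest_root_gt0 (R : realFieldType) (A Lc al : R) : 0 <= A -> 0 < Lc ->
  A + al = Lc * al ^+ 2 -> (forall a, A + a = Lc * a ^+ 2 -> a <= al) -> 0 < al.
Proof.
move=> A0 Lc_gt0 al_root al_max.
have : Lc^-1 - al <= al.
  apply: al_max; have -> : Lc * (Lc^-1 - al) ^+ 2 = Lc^-1 - 2 * al + Lc * al ^+ 2.
    by field; rewrite gt_eqF.
  lra.
have : 0 < Lc^-1 by rewrite invr_gt0.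
lra.
Qed.

Section AdaptiveMirrorTriangleRun.
Variables (R : realType) (n m : nat) (nrm : 'rV[R]_n -> R) (Q : set 'rV[R]_n).
Variables (fs : 'I_m.+1 -> 'rV[R]_n -> R) (gs : 'I_m.+1 -> 'rV[R]_n -> 'rV[R]_n).
Variables (h d : 'rV[R]_n -> R) (gd : 'rV[R]_n -> 'rV[R]_n).
Variables (x0 : 'rV[R]_n) (L0 : R) (N : nat) (Lk alpha A : nat -> R).
Variables (x u y : nat -> 'rV[R]_n).
Hypothesis convQ : convex_set Q.
Hypothesis Qx0 : Q x0.
Hypothesis L0_gt0 : 0 < L0.
Hypothesis run : amt_run nrm Q fs gs h d gd x0 L0 N Lk alpha A x u y.

Lemma amt_step_gt0 k : (k < N)%N -> 0 <= A k -> 0 < Lk k ->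
  [/\ 0 < Lk k.+1, 0 < alpha k.+1 & 0 < A k.+1].
Proof.
move=> kN Ak Lk_gt0; have [[[i eL] [al_root al_max]] [eA _] _ _ _] := run.2 k kN.
have Lk1_gt0 : 0 < Lk k.+1 by rewrite eL mulr_gt0 ?divr_gt0 ?exprn_gt0.
have al_gt0 := largest_root_gt0 Ak Lk1_gt0 al_root al_max.
by split=> //; rewrite eA; lra.
Qed.

Lemma amt_run_invariant j : (j <= N)%N ->
  [/\ Q (x j), Q (u j), 0 <= A j & 0 < Lk j].
Proof.
have [[eL0 [_ [eA0 [ex0 [eu0 _]]]]] steps] := run.
elim: j => [|j IH] jN; first by rewrite ex0 eu0 eA0 eL0.
have [Qxj Quj Aj Lj] := IH (ltnW jN).
have [Lj1 alj1 Aj1] := amt_step_gt0 jN Aj Lj.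
have [_ [eA _] [Qu1 _] ex1 _] := steps j jN.
split=> //; last by lra.
by rewrite ex1 eA; apply: convex_set_combination; rewrite -?eA //; lra.
Qed.

End AdaptiveMirrorTriangleRun.

Unset Implicit Arguments.

Theorem lemma3 (R : realType) (n m : nat) (nrm : 'rV[R]_n -> R) (Q : set 'rV[R]_n)
  (fs : 'I_m.+1 -> 'rV[R]_n -> R) (gs : 'I_m.+1 -> 'rV[R]_n -> 'rV[R]_n)
  (h : 'rV[R]_n -> R) (d : 'rV[R]_n -> R) (gd : 'rV[R]_n -> 'rV[R]_n)
  (L L0 : R) (x0 : 'rV[R]_n) (N : nat)
  (Lk alpha A : nat -> R) (x u y : nat -> 'rV[R]_n) :
  is_norm nrm ->
  closed Q -> convex_set Q ->
  (forall i, convex_on Q (fs i)) ->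
  (forall i, gradient_on Q (fs i) (gs i)) ->
  (forall i a b, Q a -> Q b ->
     dual_norm nrm (gs i a - gs i b) <= L * nrm (a - b)) ->
  convex_on Q h ->
  gradient_on Q d gd -> {within Q, continuous gd} ->
  strongly_convex1_on nrm Q d ->
  Q x0 -> 0 < L0 -> L0 <= L ->
  amt_run nrm Q fs gs h d gd x0 L0 N Lk alpha A x u y ->
  forall k : nat, (k < N)%N ->
  forall z, Q z ->
    A k.+1 * fobj fs h (x k.+1) - A k * fobj fs h (x k)
      + bregman d gd z (u k.+1) - bregman d gd z (u k)
    <= alpha k.+1 * fobj fs h z.
Proof.
(* The Lipschitz bound, closedness of Q and continuity of grad d only make the
   backtracking terminate; here the acceptance test is part of the run. *)
move=> nrmP _ convQ convf gradf _ convh gradd _ scd Qx0 L0_gt0 _ run k kN z Qz.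
have [Qxk Quk Ak Lk_gt0] := amt_run_invariant convQ Qx0 L0_gt0 run (ltnW kN).
have [_ al_gt0 A1_gt0] := amt_step_gt0 run kN Ak Lk_gt0.
have [[_ [al_root _]] [eA ey] [Qu1 u1_min] ex1 accepted] := run.2 k kN.
pose phi w := linmax fs gs (y k.+1) w + h w.
have convphi : convex_on Q phi := convex_onD (convex_linmax fs gs (y k.+1)) convh.
have Qy1 : Q (y k.+1).
  by rewrite ey eA; apply: convex_set_combination; rewrite -?eA //; lra.
have fobj_x1 : A k.+1 * fobj fs h (x k.+1)
    <= A k.+1 * phi (x k.+1) + 1 / 2 * nrm (u k.+1 - u k) ^+ 2.
  apply: (acceptance_scaled (Lc := Lk k.+1) nrmP A1_gt0 (ltW al_gt0)).
    by rewrite eA al_root.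
  have -> : (alpha k.+1 / A k.+1) *: (u k.+1 - u k) = x k.+1 - y k.+1.
    by rewrite ex1 ey combinationBl.
  by rewrite /phi; lra.
have phi_x1 : A k.+1 * phi (x k.+1) <= alpha k.+1 * phi (u k.+1) + A k * phi (x k).
  by rewrite ex1 eA; apply: (convex_on_combination convphi); rewrite -?eA //; lra.
have prox := bregman_prox_le convQ gradd convphi (ltW al_gt0) Qu1 Qz u1_min.
have strong := strongly_convex_bregman_ge scd gradd Qu1 Quk.
have phi_xk : phi (x k) <= fobj fs h (x k) := linmax_le_fobj h convf gradf Qy1 Qxk.
have phi_z : phi z <= fobj fs h z := linmax_le_fobj h convf gradf Qy1 Qz.
have := ler_wpM2l Ak phi_xk; have := ler_wpM2l (ltW al_gt0) phi_z.
clear -fobj_x1 phi_x1 strong prox; lra.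
Qed.
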